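(* Let $b\in\mathfrak{lie}_C$. Then $b$ is a push-invariant polynomial (i.e. $push(b)=b$) if and only if the mould $ma(b)$ is push-invariant.
   Context: $\mathfrak{lie}_C$ is the completed free Lie algebra over $\mathbb{Q}$ on $C_i=\mathrm{ad}(x)^{i-1}(y)$, $i\ge1$, inside $\mathbb{Q}\langle\langle x,y\rangle\rangle$; every element of $\mathfrak{lie}_C$ is uniquely a noncommutative series in the $C_i$. The push operator on words in $x,y$ is $push(x^{a_0}yx^{a_1}y\cdots yx^{a_r})=x^{a_r}yx^{a_0}y\cdots yx^{a_{r-1}}$, trivial on constants and powers of $x$, extended linearly. A mould is a family $A=(A^r)_{r\ge0}$ with $A^r$ a rational function in $u_1,\dots,u_r$; $ma$ sends a series $\sum k_{\underline a}C_{a_1}\cdots C_{a_r}$ (summed over all $r$) to the mould whose depth-$r$ component is $\sum k_{\underline a}u_1^{a_1-1}\cdots u_r^{a_r-1}$. A mould $A$ is push-invariant if $A(u_0,u_1,\dots,u_{r-1})=A(u_1,\dots,u_r)$ for all $r\ge1$, where $u_0=-u_1-\dots-u_r$. *)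

From HB Require Import structures.
From mathcomp Require Import all_boot all_order all_algebra.
From mathcomp Require Import mpoly.
Set Implicit Arguments. Unset Strict Implicit. Unset Printing Implicit Defensive.
Import Order.TTheory GRing.Theory Num.Theory.
Local Open Scope ring_scope.

(* A letter is a bool: false = x, true = y.  A word is a seq bool.   *)
Definition word := seq bool.

(* A noncommutative polynomial is a formal finite sum of terms c * w.
   Two such sums denote the same element of Q<x,y> iff they have the
   same coefficient function [coef]; all statements use [nc_eq]. *)
Definition ncpoly := seq (rat * word).

Definition coef (p : ncpoly) (w : word) : rat :=
  \sum_(t <- p | t.2 == w) t.1.

Definition nc_eq (p q : ncpoly) : Prop := forall w, coef p w = coef q w.

Definition nc_add (p q : ncpoly) : ncpoly := p ++ q.
Definition nc_scale (c : rat) (p : ncpoly) : ncpoly :=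
  [seq (c * t.1, t.2) | t <- p].
Definition nc_mul (p q : ncpoly) : ncpoly :=
  [seq (s.1 * t.1, s.2 ++ t.2) | s <- p, t <- q].
Definition nc_bracket (p q : ncpoly) : ncpoly :=
  nc_add (nc_mul p q) (nc_scale (-1) (nc_mul q p)).

Definition nc_one : ncpoly := [:: (1, [::])].
Definition nc_x : ncpoly := [:: (1, [:: false])].
Definition nc_y : ncpoly := [:: (1, [:: true])].

(* Cgen a = C_{a+1} = ad(x)^a (y). *)
Definition Cgen (a : nat) : ncpoly := iter a (nc_bracket nc_x) nc_y.

(* lie_C intersected with Q<x,y>: the Lie subalgebra (over Q) generated by
   the C_i, closed under the identification [nc_eq]. *)
Inductive in_lieC : ncpoly -> Prop :=
| lieC_gen a : in_lieC (Cgen a)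
| lieC_zero : in_lieC [::]
| lieC_add p q : in_lieC p -> in_lieC q -> in_lieC (nc_add p q)
| lieC_scale c p : in_lieC p -> in_lieC (nc_scale c p)
| lieC_bracket p q : in_lieC p -> in_lieC q -> in_lieC (nc_bracket p q)
| lieC_ext p q : in_lieC p -> nc_eq p q -> in_lieC q.

(* push (x^{a0} y x^{a1} y ... y x^{ar}) = x^{ar} y x^{a0} y ... y x^{a(r-1)},
   identity on words without y.  Writing w = u ++ y :: x^t (t trailing x's),
   push w = x^t ++ y :: u. *)
Definition push_word (w : word) : word :=
  let t := find id (rev w) in
  if t == size w then w
  else nseq t false ++ true :: take (size w - t - 1) w.

Definition nc_push (p : ncpoly) : ncpoly := [seq (t.1, push_word t.2) | t <- p].

(* A noncommutative polynomial in the letters C_1, C_2, ...; the letter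
   a : nat stands for C_{a+1}. *)
Definition Cpoly := seq (rat * seq nat).

Definition evalC (f : Cpoly) : ncpoly :=
  foldr nc_add [::]
    [seq nc_scale t.1 (foldr nc_mul nc_one (map Cgen t.2)) | t <- f].

(* A mould with polynomial components: depth r component in u_1..u_r,
   the variable 'X_i (i < r) standing for u_{i+1}. *)
Definition mould := forall r : nat, {mpoly rat[r]}.

(* ma: the term k * C_{a1+1} ... C_{ar+1} goes to k * u_1^{a1} ... u_r^{ar}
   in depth r. *)
Definition ma (f : Cpoly) : mould := fun r =>
  \sum_(t <- f | size t.2 == r) t.1 *: \prod_(i < r) 'X_i ^+ nth 0%N t.2 i.

(* Substitution (u_1,...,u_{r+1}) |-> (u_0, u_1, ..., u_r) in depth r+1,
   with u_0 = -u_1 - ... - u_{r+1}. *)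
Definition push_subst (r : nat) : (r.+1).-tuple {mpoly rat[r.+1]} :=
  [tuple (if (j : nat) == 0%N then - \sum_(i < r.+1) 'X_i
          else 'X_(inord (j.-1))) | j < r.+1].

Definition mould_push_invariant (A : mould) : Prop :=
  forall r : nat, comp_mpoly (push_subst r) (A r.+1) = A r.+1.

(* Send a word x^a_0 y x^a_1 ... y x^a_r to the monomial z_0^a_0 ... z_r^a_r in
   r+1 commuting variables (Schneps' vimo).  On words with r letters y this is
   injective, and push becomes the cyclic shift z_j -> z_(j+1 mod r+1).  As
   C_(a+1) = ad(x)^a(y) goes to (z_i - z_(i+1))^a, the image of a polynomial f in
   the C_i is ma(f) under the injective substitution u_j = z_(j-1) - z_j.  This
   substitution sends u_0 = -(u_1 + ... + u_r) to z_r - z_0, so it conjugates the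
   push substitution of moulds into the inverse cyclic shift, and push(b) = b iff
   ma(f) is push-invariant. *)

From HB Require Import structures.
From mathcomp Require Import all_boot all_order all_algebra.
From mathcomp Require Import fingroup perm mpoly zify.
Set Implicit Arguments. Unset Strict Implicit. Unset Printing Implicit Defensive.
Import GRing.Theory.
Local Open Scope ring_scope.

Section Substitutions.
Context {R : comNzRingType}.

Lemma rmorph_comp_mpoly n k l (g : {rmorphism {mpoly R[k]} -> {mpoly R[l]}}) :
  scalable g -> forall (lq : n.-tuple {mpoly R[k]}) (p : {mpoly R[n]}),
  g (p \mPo lq) = p \mPo [tuple g (tnth lq i) | i < n].
Proof.
move=> gZ lq p; rewrite (comp_mpolyEX p lq) [RHS]comp_mpolyEX raddf_sum /=.
apply: eq_bigr => m _; rewrite gZ !comp_mpolyX rmorph_prod; congr (_ *: _).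
by apply: eq_bigr => i _; rewrite rmorphXn tnth_mktuple.
Qed.

Lemma comp_mpolyA n k l (lq : n.-tuple {mpoly R[k]}) (lp : k.-tuple {mpoly R[l]})
    (p : {mpoly R[n]}) :
  (p \mPo lq) \mPo lp = p \mPo [tuple tnth lq i \mPo lp | i < n].
Proof. exact/rmorph_comp_mpoly/comp_mpoly_is_linear. Qed.

Lemma msymXU n (s : 'S_n) (i : 'I_n) : msym s 'X_i = 'X_(s i) :> {mpoly R[n]}.
Proof. by rewrite /msym mmapX mmap1U. Qed.

Lemma msym_comp_mpoly n k (s : 'S_k) (lq : n.-tuple {mpoly R[k]}) (p : {mpoly R[n]}) :
  msym s (p \mPo lq) = p \mPo [tuple msym s (tnth lq i) | i < n].
Proof. by apply: rmorph_comp_mpoly => c q; exact: msymZ. Qed.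

Definition diff_subst r : r.-tuple {mpoly R[r.+1]} :=
  [tuple 'X_(inord i) - 'X_(inord i.+1) | i < r].

Definition tailsum_subst r : r.+1.-tuple {mpoly R[r]} :=
  [tuple \sum_(j < r | (i <= j)%N) 'X_j | i < r.+1].

Lemma nth_diff_subst r k : (k < r)%N ->
  (diff_subst r)`_k = 'X_(inord k) - 'X_(inord k.+1).
Proof. by move=> lt_kr; rewrite -[k]/(val (Ordinal lt_kr)) nth_mktuple. Qed.

Lemma diff_substK r : cancel (comp_mpoly (diff_subst r)) (comp_mpoly (tailsum_subst r)).
Proof.
move=> p; rewrite comp_mpolyA -[RHS]comp_mpoly_id; congr comp_mpoly.
apply: eq_from_tnth => i; rewrite !tnth_mktuple comp_mpolyB !comp_mpolyXU.
rewrite !nth_mktuple !inordK ?ltnS ?(ltnW (ltn_ord i)) // (bigD1 i) ?leqnn //=.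
rewrite (eq_bigl (fun j : 'I_r => (i < j)%N)) ?addrK // => j.
by rewrite ltn_neqAle andbC eq_sym.
Qed.

Lemma comp_diff_subst_sumX r :
  (\sum_(i < r) 'X_i) \mPo diff_subst r = 'X_(inord 0) - 'X_(inord r).
Proof.
rewrite raddf_sum /=.
under eq_bigr => i _ do rewrite comp_mpolyXU nth_diff_subst //.
rewrite -(big_mkord xpredT (fun i => 'X_(inord i) - 'X_(inord i.+1))).
rewrite -opprB -(telescope_sumr (fun i => 'X_(inord i))) // -sumrN.
by apply: eq_bigr => i _; rewrite opprB.
Qed.

Definition cycle_perm n : 'S_n := perm (@ordS_inj n).

Lemma cycle_perm1 : cycle_perm 1 = 1%g.
Proof. by apply/permP => i; rewrite !ord1. Qed.

Lemma msym_cycle_X n j : (j <= n)%N ->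
  msym (cycle_perm n.+1) 'X_(inord j) = 'X_(inord (j.+1 %% n.+1)) :> {mpoly R[n.+1]}.
Proof.
move=> le_jn; rewrite msymXU permE; congr 'X_(_); apply: val_inj.
by rewrite /= !inordK ?ltn_pmod.
Qed.

End Substitutions.

Lemma msym_cycle_diff_push r (A : {mpoly rat[r.+1]}) :
  msym (cycle_perm r.+2) ((A \mPo push_subst r) \mPo diff_subst r.+1) =
  A \mPo diff_subst r.+1.
Proof.
rewrite comp_mpolyA msym_comp_mpoly; congr comp_mpoly.
apply: eq_from_tnth => j; rewrite !tnth_mktuple.
case: j => [[|k] lt_kr] /=.
  rewrite comp_mpolyN comp_diff_subst_sumX opprB msymB.
  by rewrite !msym_cycle_X // modnn modn_small ?ltnS.
have lt_kr1 : (k < r.+1)%N := ltnW lt_kr.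
rewrite comp_mpolyXU (inordK lt_kr1) (nth_diff_subst lt_kr1) msymB.
by rewrite !msym_cycle_X ?modn_small //; lia.
Qed.

Definition ydeg (w : word) : nat := count id w.

Lemma ydeg_cat u v : ydeg (u ++ v) = (ydeg u + ydeg v)%N.
Proof. exact: count_cat. Qed.

Lemma ydeg_xpow t : ydeg (nseq t false) = 0%N.
Proof. by rewrite /ydeg count_nseq mul0n. Qed.

(* The j-th block of x's of w goes to the variable i + j. *)
Fixpoint word_mnm (n i : nat) (w : word) : 'X_{1..n.+1} :=
  match w with
  | [::] => 0%MM
  | false :: w' => (U_(inord i) + word_mnm n i w')%MM
  | true :: w' => word_mnm n i.+1 w'
  end.

Lemma word_mnm_cat n i u v :
  word_mnm n i (u ++ v) = (word_mnm n i u + word_mnm n (i + ydeg u) v)%MM.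
Proof.
elim: u i => [|[] u IHu] i /=; first by rewrite add0m addn0.
  by rewrite IHu addSnnS.
by rewrite IHu addmA.
Qed.

Lemma word_mnm_xpow n i t : word_mnm n i (nseq t false) = (U_(inord i) *+ t)%MM.
Proof. by elim: t => [|t IHt] /=; rewrite ?mulm0n // IHt mulmS. Qed.

Definition yhomog (k : nat) (p : ncpoly) : bool := all (fun t => ydeg t.2 == k) p.

Lemma yhomog_add k p q : yhomog k p -> yhomog k q -> yhomog k (nc_add p q).
Proof. by rewrite /yhomog all_cat => -> ->. Qed.

Lemma yhomog_scale k c p : yhomog k p -> yhomog k (nc_scale c p).
Proof. by rewrite /yhomog all_map. Qed.

Lemma yhomog_mul k l p q : yhomog k p -> yhomog l q -> yhomog (k + l) (nc_mul p q).
Proof.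
move=> /allP hp /allP hq; apply/allP => _ /allpairsP[[s t] [/= /hp/eqP ps /hq/eqP qt ->]].
by rewrite /= ydeg_cat ps qt.
Qed.

Lemma yhomog_Cgen a : yhomog 1 (Cgen a).
Proof.
elim: a => [|a IHa] //=; apply: yhomog_add; first exact: (@yhomog_mul 0 1).
by apply: yhomog_scale; exact: (@yhomog_mul 1 0).
Qed.

Definition prodC (l : seq nat) : ncpoly := foldr nc_mul nc_one (map Cgen l).

Lemma yhomog_prodC l : yhomog (size l) (prodC l).
Proof. by elim: l => [|a l IHl] //=; exact: (yhomog_mul (yhomog_Cgen a) IHl). Qed.

Definition vimo (n k i : nat) (p : ncpoly) : {mpoly rat[n.+1]} :=
  \sum_(t <- p | ydeg t.2 == k) t.1 *: 'X_[word_mnm n i t.2].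

Lemma vimo_add n k i p q : vimo n k i (nc_add p q) = vimo n k i p + vimo n k i q.
Proof. by rewrite /vimo big_cat. Qed.

Lemma vimo_scale n k i c p : vimo n k i (nc_scale c p) = c *: vimo n k i p.
Proof.
by rewrite /vimo big_map scaler_sumr; apply: eq_bigr => t _; rewrite scalerA.
Qed.

Lemma vimo_yhomog_eq0 n k l i p : yhomog l p -> l != k -> vimo n k i p = 0.
Proof.
move=> /allP hp /negbTE ne_lk; rewrite /vimo big_seq_cond big1 // => t.
by case/andP => /hp/eqP->; rewrite ne_lk.
Qed.

Lemma vimo_mul n k l i p q : yhomog k p ->
  vimo n (k + l) i (nc_mul p q) = vimo n k i p * vimo n l (i + k) q.
Proof.
move=> /allP hp; rewrite /vimo /nc_mul big_mkcond big_allpairs_dep /=.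
rewrite big_distrl /= [RHS]big_mkcond !big_seq; apply: eq_bigr => s /hp/eqP ps.
rewrite ps eqxx mulr_sumr [RHS]big_mkcond; apply: eq_bigr => t _ /=.
rewrite ydeg_cat ps eqn_add2l; case: ifP => // _.
by rewrite word_mnm_cat ps mpolyXD -scalerAl -scalerAr scalerA.
Qed.

Lemma vimo_x n i : vimo n 0 i nc_x = 'X_(inord i).
Proof. by rewrite /vimo big_cons big_nil /= addm0 scale1r addr0. Qed.

Lemma vimo_Cgen n i a :
  vimo n 1 i (Cgen a) = ('X_(inord i) - 'X_(inord i.+1)) ^+ a.
Proof.
elim: a => [|a IHa].
  by rewrite /vimo big_cons big_nil /= mpolyX0 scale1r addr0.
rewrite /= /nc_bracket vimo_add vimo_scale (@vimo_mul n 0 1) //.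
rewrite (@vimo_mul n 1 0) ?yhomog_Cgen // !vimo_x addn0 addn1 IHa.
by rewrite exprS mulrBl scaleN1r [_ * 'X_(inord i.+1)]mulrC.
Qed.

Lemma vimo_prodC n i l : vimo n (size l) i (prodC l) =
  \prod_(j < size l) ('X_(inord (i + j)) - 'X_(inord (i + j).+1)) ^+ nth 0%N l j.
Proof.
elim: l i => [|a l IHl] i.
  by rewrite /vimo big_cons big_nil /= big_ord0 mpolyX0 scale1r addr0.
rewrite /prodC /= -/(prodC l) (@vimo_mul n 1 (size l)) ?yhomog_Cgen //.
rewrite vimo_Cgen IHl big_ord_recl addn0; congr (_ * _).
by apply: eq_bigr => j _; rewrite lift0 /= addn1 addSnnS.
Qed.

Lemma vimo_evalC r f : vimo r r 0 (evalC f) = ma f r \mPo diff_subst r.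
Proof.
rewrite /ma raddf_sum /= big_mkcond /evalC.
elim: f => [|t f IHf] /=; first by rewrite big_nil /vimo big_nil.
rewrite vimo_add IHf big_cons; congr (_ + _).
rewrite vimo_scale -/(prodC t.2); case: eqP => [<-|/eqP ne_r].
  rewrite vimo_prodC comp_mpolyZ rmorph_prod; congr (_ *: _).
  by apply: eq_bigr => j _; rewrite rmorphXn /= comp_mpolyXU nth_diff_subst.
by rewrite (vimo_yhomog_eq0 _ _ (yhomog_prodC t.2)) ?scaler0.
Qed.

Lemma coef_cons t p w :
  coef (t :: p) w = (if t.2 == w then t.1 else 0) + coef p w.
Proof. by rewrite /coef big_cons; case: ifP => _ //; rewrite add0r. Qed.

Lemma vimo_coefE n k i p (s : seq word) : uniq s -> {subset map snd p <= s} ->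
  vimo n k i p = \sum_(w <- s | ydeg w == k) coef p w *: 'X_[word_mnm n i w].
Proof.
move=> s_uniq; elim: p => [|t p IHp] sub_ps.
  by rewrite /vimo big_nil big1 // => w _; rewrite /coef big_nil scale0r.
have t_s : t.2 \in s by apply: sub_ps; rewrite inE eqxx.
rewrite /vimo big_cons -/(vimo n k i p) IHp => [|w w_p]; last first.
  by apply: sub_ps; rewrite inE w_p orbT.
under [RHS]eq_bigr => w _ do rewrite coef_cons scalerDl.
rewrite big_split /=.
have -> : \sum_(w <- s | ydeg w == k) (if t.2 == w then t.1 else 0) *: 'X_[word_mnm n i w]
    = if ydeg t.2 == k then t.1 *: 'X_[word_mnm n i t.2] else 0.
  rewrite big_mkcond (bigD1_seq t.2) //= eqxx big1 ?addr0 // => w.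
  by rewrite eq_sym => /negbTE ->; rewrite scale0r if_same.
by case: ifP; rewrite ?add0r.
Qed.

Lemma vimo_nc_eq n k i p q : nc_eq p q -> vimo n k i p = vimo n k i q.
Proof.
move=> eq_pq; pose s := undup (map snd (p ++ q)).
have s_uniq : uniq s := undup_uniq _.
have sub_p : {subset map snd p <= s}.
  by move=> w w_p; rewrite mem_undup map_cat mem_cat w_p.
have sub_q : {subset map snd q <= s}.
  by move=> w w_q; rewrite mem_undup map_cat mem_cat w_q orbT.
rewrite (vimo_coefE _ _ _ s_uniq sub_p) (vimo_coefE _ _ _ s_uniq sub_q).
by apply: eq_bigr => w _; rewrite eq_pq.
Qed.

Lemma word_mnm_lt n i w (j : 'I_n.+1) :
  (i + ydeg w <= n)%N -> (j < i)%N -> word_mnm n i w j = 0%N.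
Proof.
elim: w i => [|[] w IHw] i /= le_n lt_ji; first by rewrite mnm0E.
  by apply: IHw; move: le_n lt_ji; rewrite /ydeg /=; lia.
rewrite mnmDE mnm1E IHw // addn0; suff /negbTE -> : inord i != j by [].
by apply/eqP => /(congr1 val); rewrite /= inordK; move: le_n lt_ji; lia.
Qed.

Lemma word_mnm_head n i w : (i + ydeg w <= n)%N ->
  (0 < word_mnm n i w (inord i))%N = ~~ head true w.
Proof.
case: w => [|[] w] /= le_n; first by rewrite mnm0E.
  by rewrite word_mnm_lt ?inordK //; lia.
by rewrite mnmDE mnm1E eqxx.
Qed.

Lemma word_mnm_inj n i w w' : ydeg w = ydeg w' -> (i + ydeg w <= n)%N ->
  word_mnm n i w = word_mnm n i w' -> w = w'.
Proof.
elim: w w' i => [|b u IHu] w' i eq_y le_n eq_m.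
  have := word_mnm_head le_n; rewrite eq_m word_mnm_head -?eq_y //.
  by case: w' eq_y {eq_m} => [|[] u'] //=; rewrite mnm0E.
have := word_mnm_head le_n; rewrite eq_m word_mnm_head -?eq_y //.
case: w' eq_y eq_m => [|b' u'] /= eq_y eq_m; first by case: b eq_y le_n {eq_m}.
move=> /negb_inj eq_b; subst b'; congr (_ :: _); case: b eq_y eq_m le_n => /=.
  by move=> [eq_y] eq_m le_n; apply: (IHu _ i.+1) => //; lia.
by move=> eq_y /addmI eq_m le_n; apply: (IHu _ i).
Qed.

Lemma mcoeff_vimo n p w : ydeg w = n -> (vimo n n 0 p)@_(word_mnm n 0 w) = coef p w.
Proof.
move=> yw; rewrite /vimo /coef raddf_sum /= big_mkcond [RHS]big_mkcond /=.
apply: eq_bigr => t _; rewrite mcoeffZ mcoeffX.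
have [->|ne_tw] := eqVneq t.2 w; first by rewrite yw !eqxx mulr1.
case: eqP => // yt; suff /negbTE -> : word_mnm n 0 t.2 != word_mnm n 0 w by rewrite mulr0.
by apply: contra_neq ne_tw; apply: word_mnm_inj; rewrite ?yt ?add0n.
Qed.

Lemma nc_eq_vimo p q : nc_eq p q <-> forall r, vimo r r 0 p = vimo r r 0 q.
Proof.
split=> [eq_pq r | eq_vimo w]; first exact: vimo_nc_eq.
by rewrite -(mcoeff_vimo p (erefl (ydeg w))) eq_vimo mcoeff_vimo.
Qed.

Lemma last_y_decomp (w : word) :
  ~~ has id w \/ exists u t, w = u ++ true :: nseq t false.
Proof.
elim/last_ind: w => [|w [] IHw]; first by left.
  by right; exists w, 0%N; rewrite cats1.
case: IHw => [noy|[u [t ->]]]; first by left; rewrite -cats1 has_cat negb_or noy.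
by right; exists u, t.+1; rewrite rcons_cat rcons_cons -cats1 -addn1 nseqD.
Qed.

Lemma push_word_noy w : ~~ has id w -> push_word w = w.
Proof.
move=> noy; rewrite /push_word.
suff -> : find id (rev w) = size w by rewrite eqxx.
by apply/eqP; rewrite eqn_leq -size_rev find_size leqNgt -has_find has_rev.
Qed.

Lemma push_word_last_y u t :
  push_word (u ++ true :: nseq t false) = nseq t false ++ true :: u.
Proof.
rewrite /push_word rev_cat rev_cons rev_nseq -cats1 -catA find_cat has_nseq andbF /=.
rewrite size_nseq addn0 size_cat /= size_nseq.
have -> : (t == size u + t.+1)%N = false by apply/negbTE; lia.
have -> : (size u + t.+1 - t - 1 = size u)%N by lia.
by rewrite take_size_cat.
Qed.

Lemma ydeg_push_word w : ydeg (push_word w) = ydeg w.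
Proof.
case: (last_y_decomp w) => [noy|[u [t ->]]]; first by rewrite push_word_noy.
by rewrite push_word_last_y !ydeg_cat /= ydeg_xpow; lia.
Qed.

Lemma msym_cycle_word_mnm r i u : (i + ydeg u < r)%N ->
  msym (cycle_perm r.+1) 'X_[word_mnm r i u] = 'X_[word_mnm r i.+1 u]
  :> {mpoly rat[r.+1]}.
Proof.
elim: u i => [|[] u IHu] i /= lt_r; first by rewrite mpolyX0 msym1.
  by rewrite IHu //; move: lt_r; rewrite /ydeg /=; lia.
rewrite !mpolyXD msymM IHu // msym_cycle_X ?modn_small //; lia.
Qed.

Lemma word_mnm_push r w : ydeg w = r ->
  'X_[word_mnm r 0 (push_word w)] = msym (cycle_perm r.+1) 'X_[word_mnm r 0 w]
  :> {mpoly rat[r.+1]}.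
Proof.
case: (last_y_decomp w) => [noy|[u [t ->]]] yw.
  have {yw}r0 : r = 0%N by rewrite -yw; apply/eqP; rewrite -leqn0 leqNgt -has_count.
  by subst r; rewrite push_word_noy // cycle_perm1 msym1m.
rewrite ydeg_cat /= ydeg_xpow in yw; subst r.
rewrite push_word_last_y !word_mnm_cat /= ydeg_xpow !word_mnm_xpow !mpolyXD msymM.
rewrite msym_cycle_word_mnm ?addn1 // -!mpolyXn rmorphXn /= msym_cycle_X // modnn.
by rewrite mulrC.
Qed.

Lemma vimo_push r p : vimo r r 0 (nc_push p) = msym (cycle_perm r.+1) (vimo r r 0 p).
Proof.
rewrite /vimo /nc_push big_map raddf_sum /= big_mkcond [RHS]big_mkcond /=.
apply: eq_bigr => t _; rewrite ydeg_push_word; case: eqP => // yt.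
by rewrite msymZ word_mnm_push.
Qed.

Theorem proposition12 (b : ncpoly) (f : Cpoly) :
  in_lieC b -> nc_eq (evalC f) b ->
  (nc_eq (nc_push b) b <-> mould_push_invariant (ma f)).
Proof.
move=> _ eq_fb.
have vimo_b r : vimo r r 0 b = ma f r \mPo diff_subst r.
  by rewrite -(vimo_nc_eq r r 0 eq_fb) vimo_evalC.
rewrite nc_eq_vimo; split=> [inv_b r | inv_f [|r]].
- apply: (can_inj (@diff_substK _ r.+1)); apply: (inj_msym (cycle_perm r.+2)).
  by rewrite msym_cycle_diff_push -vimo_b -vimo_push inv_b.
- by rewrite vimo_push cycle_perm1 msym1m.
- by rewrite vimo_push vimo_b -{1}(inv_f r) msym_cycle_diff_push.
Qed.
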